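(* Let $\mathcal{A}=\{a_1,a_2,\ldots\}$ be a countably infinite set, let $X$ be a discrete random variable taking values in $\{a_1,\ldots,a_m\}$ for some $m\in\mathbb{N}$, and let $Y$ be a discrete random variable taking values in $\mathcal{A}$. Assume $d_{\mathrm{TV}}(X,Y)\le\eta$ for some $\eta\in(0,1)$. Let $M$ be an integer with $M\ge\max\{m+1,\frac{1}{1-\eta}\}$, and assume that for some $\mu>0$, $$-\sum_{i=M}^\infty P_Y(a_i)\log P_Y(a_i)\le\mu.$$ Then $$|H(X)-H(Y)|\le\eta\log(M-1)+h(\eta)+\mu.$$
   Context: The total variation distance is $d_{\mathrm{TV}}(X,Y) = \frac12\sum_{u\in\mathcal{A}}|P_X(u)-P_Y(u)|$, where $P_X,P_Y$ are the probability mass functions. All logarithms are natural and entropies are in nats, with $0\log0=0$. $h(x) = -x\log x-(1-x)\log(1-x)$ denotes the binary entropy function. *)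

From Stdlib Require Import Reals.
Open Scope R_scope.

(* Alphabet A = {a_1, a_2, ...} is encoded by nat: a_(i+1) <-> i.
   A probability mass function on A is p : nat -> R. *)
Definition is_pmf (p : nat -> R) : Prop :=
  (forall i, 0 <= p i) /\ infinite_sum p 1.

(* Entropy term -x log x (Stdlib's ln 0 is some real, so 0 * ln 0 = 0). *)
Definition negxlogx (x : R) : R := - (x * ln x).

Definition entropy_is (p : nat -> R) (H : R) : Prop :=
  infinite_sum (fun i => negxlogx (p i)) H.

Definition dTV_is (p q : nat -> R) (d : R) : Prop :=
  exists s, infinite_sum (fun i => Rabs (p i - q i)) s /\ d = s / 2.

Definition hbin (x : R) : R := - x * ln x - (1 - x) * ln (1 - x).

(* Let N = M - 1, so that X lives on the indices {0, ..., N}.  Lump the tail of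
   Y: the vector Y' agrees with Y below N and carries the whole remaining mass
   of Y at index N.  Since X vanishes from N on, d_TV(X, Y') = d_TV(X, Y) = d.

   1. Finite continuity (a Fano-type bound): for probability vectors p, q on
      N + 1 points at distance d, H(q) - H(p) <= d ln N + h(d).  Write
      p = r + a, q = r + b with r = min(p, q); a and b have mass d and disjoint
      supports.  The grouping inequality gives
      H(p) >= H(r) + H(a) + (1-d) ln(1-d) + d ln d with H(a) >= -d ln d, while
      H(q) <= H(r) + H(b) and, since b misses a point, H(b) <= -d ln d + d ln N
      by Gibbs' inequality.
   2. The bound d ln N + h(d) is nondecreasing in d up to N / (N + 1), which
      covers [0, eta] because M >= 1 / (1 - eta).
   3. H(Y) = H(Y') - (-T ln T) + t, where T is the tail mass and t <= mu the
      tail entropy, and 0 <= -T ln T <= t; this shifts the bound by at most mu. *)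

From Stdlib Require Import Reals Lra Lia.
Open Scope R_scope.

Lemma ln_le_sub1 x : 0 < x -> ln x <= x - 1.
Proof.
  intros Hx. pose proof (exp_ineq1_le (ln x)) as E.
  rewrite exp_ln in E by exact Hx. lra.
Qed.

Lemma ln_le_mono x y : 0 < x -> x <= y -> ln x <= ln y.
Proof.
  intros Hx Hxy. destruct (Req_dec x y) as [<-|Hne]; [lra|].
  left. apply ln_increasing; lra.
Qed.

Lemma gibbs_term x z : 0 <= x -> 0 <= z -> (0 < x -> 0 < z) ->
  x * ln z - x * ln x <= z - x.
Proof.
  intros Hx Hz Hxz. destruct (Req_dec x 0) as [->|Hx0]; [lra|].
  assert (Hxp : 0 < x) by lra. specialize (Hxz Hxp).
  assert (Hq : 0 < z / x) by (apply Rdiv_lt_0_compat; lra).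
  pose proof (ln_le_sub1 _ Hq) as L.
  unfold Rdiv in L. rewrite ln_mult, ln_Rinv in L by (try apply Rinv_0_lt_compat; lra).
  apply Rmult_le_compat_l with (r := x) in L; [|lra].
  replace (x * (z * / x - 1)) with (z - x) in L by (field; lra). lra.
Qed.

Lemma negxlogx_0 : negxlogx 0 = 0.
Proof. unfold negxlogx. ring. Qed.

Lemma negxlogx_nonneg x : 0 <= x <= 1 -> 0 <= negxlogx x.
Proof.
  intros Hx. unfold negxlogx. destruct (Req_dec x 0) as [->|Hx0]; [lra|].
  assert (ln x <= 0) by (rewrite <- ln_1; apply ln_le_mono; lra). nra.
Qed.

Lemma negxlogx_subadd x y : 0 <= x -> 0 <= y ->
  negxlogx (x + y) <= negxlogx x + negxlogx y.
Proof.
  intros Hx Hy. unfold negxlogx.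
  destruct (Req_dec x 0) as [->|Hx0]; [rewrite Rplus_0_l; lra|].
  destruct (Req_dec y 0) as [->|Hy0]; [rewrite Rplus_0_r; lra|].
  assert (ln x <= ln (x + y)) by (apply ln_le_mono; lra).
  assert (ln y <= ln (x + y)) by (apply ln_le_mono; lra). nra.
Qed.

Lemma negxlogx_ge_linear x T : 0 <= x <= T -> x * (- ln T) <= negxlogx x.
Proof.
  intros Hx. unfold negxlogx. destruct (Req_dec x 0) as [->|Hx0]; [lra|].
  assert (ln x <= ln T) by (apply ln_le_mono; lra). nra.
Qed.

Lemma negxlogx_group x y a b : 0 <= x -> 0 <= y -> a + b = 1 -> x <= a -> y <= b ->
  negxlogx x + negxlogx y + x * ln a + y * ln b <= negxlogx (x + y).
Proof.
  intros Hx Hy Hab Hxa Hyb. unfold negxlogx.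
  destruct (Req_dec (x + y) 0) as [Hs0|Hs0].
  { assert (x = 0) as -> by lra. assert (y = 0) as -> by lra. lra. }
  assert (Hs : 0 < x + y) by lra.
  (* ln of a product, harmless when the weight in front vanishes *)
  assert (Hsplit : forall w c, 0 <= w -> w <= c ->
            w * ln (c * (x + y)) = w * ln c + w * ln (x + y)).
  { intros w c Hw Hwc. destruct (Req_dec w 0) as [->|Hw0]; [ring|].
    rewrite ln_mult by lra. ring. }
  pose proof (gibbs_term x (a * (x + y)) Hx ltac:(nra) ltac:(intros; nra)) as L1.
  pose proof (gibbs_term y (b * (x + y)) Hy ltac:(nra) ltac:(intros; nra)) as L2.
  rewrite Hsplit in L1, L2 by lra. nra.
Qed.

(* [fsum n g] = g 0 + ... + g (n - 1), the sum of the first n terms; the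
   partial sums of Stdlib's series are [sum_f_R0 g n = fsum (S n) g]. *)
Fixpoint fsum (n : nat) (g : nat -> R) : R :=
  match n with O => 0 | S n => fsum n g + g n end.

Lemma fsum_ext n g h : (forall i, (i < n)%nat -> g i = h i) -> fsum n g = fsum n h.
Proof.
  induction n as [|n IH]; simpl; intros E; [reflexivity|].
  rewrite IH by (intros; apply E; lia). rewrite E by lia. reflexivity.
Qed.

Lemma fsum_le n g h : (forall i, (i < n)%nat -> g i <= h i) -> fsum n g <= fsum n h.
Proof.
  induction n as [|n IH]; simpl; intros E; [lra|].
  pose proof (IH ltac:(intros; apply E; lia)). pose proof (E n ltac:(lia)). lra.
Qed.

Lemma fsum_plus n g h : fsum n (fun i => g i + h i) = fsum n g + fsum n h.
Proof. induction n as [|n IH]; simpl; [ring|]. rewrite IH. ring. Qed.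

Lemma fsum_minus n g h : fsum n (fun i => g i - h i) = fsum n g - fsum n h.
Proof. induction n as [|n IH]; simpl; [ring|]. rewrite IH. ring. Qed.

Lemma fsum_scal n g c : fsum n (fun i => g i * c) = fsum n g * c.
Proof. induction n as [|n IH]; simpl; [ring|]. rewrite IH. ring. Qed.

Lemma fsum_const n c : fsum n (fun _ => c) = INR n * c.
Proof. induction n as [|n IH]; [simpl; ring|]. rewrite S_INR. simpl. rewrite IH. ring. Qed.

Lemma fsum_nonneg n g : (forall i, (i < n)%nat -> 0 <= g i) -> 0 <= fsum n g.
Proof.
  intros H. apply fsum_le in H. rewrite fsum_const, Rmult_0_r in H. exact H.
Qed.

Lemma fsum_term_le n g j : (forall i, (i < n)%nat -> 0 <= g i) -> (j < n)%nat ->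
  g j <= fsum n g.
Proof.
  induction n as [|n IH]; intros H Hj; [lia|]. simpl.
  pose proof (H n ltac:(lia)) as Hn.
  destruct (Nat.eq_dec j n) as [->|Hne].
  - pose proof (fsum_nonneg n g ltac:(intros; apply H; lia)). lra.
  - pose proof (IH ltac:(intros; apply H; lia) ltac:(lia)). lra.
Qed.

Lemma fsum_exists_pos n g : 0 < fsum n g -> exists j, (j < n)%nat /\ 0 < g j.
Proof.
  induction n as [|n IH]; simpl; intros H; [lra|].
  destruct (Rlt_dec 0 (g n)) as [Hp|Hp]; [exists n; split; auto|].
  destruct IH as [j [Hj Hg]]; [lra|]. exists j; split; auto.
Qed.

Lemma fsum_except_one n j c : (j < n)%nat ->
  fsum n (fun i => if Nat.eqb i j then 0 else c) = INR (n - 1) * c.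
Proof.
  induction n as [|n IH]; intros Hj; [lia|]. simpl.
  destruct (Nat.eq_dec j n) as [->|Hne].
  - rewrite Nat.eqb_refl, (fsum_ext n _ (fun _ => c)), fsum_const.
    + replace (n - 0)%nat with n by lia. ring.
    + intros i Hi. destruct (Nat.eqb_spec i n); [lia|reflexivity].
  - rewrite IH by lia. destruct (Nat.eqb_spec n j); [lia|].
    replace (n - 0)%nat with (S (n - 1)) by lia. rewrite (S_INR (n - 1)). ring.
Qed.

Lemma sum_f_R0_fsum g n : sum_f_R0 g n = fsum (S n) g.
Proof. induction n as [|n IH]; simpl; [ring|]. rewrite IH. reflexivity. Qed.

Lemma fsum_shift k N g : fsum (k + N) g = fsum N g + fsum k (fun i => g (i + N)%nat).
Proof. induction k as [|k IH]; simpl; [ring|]. rewrite IH. ring. Qed.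

Lemma infinite_sum_finite g n : (forall i, (n <= i)%nat -> g i = 0) ->
  infinite_sum g (fsum n g).
Proof.
  intros H eps He. exists n. intros k Hk. rewrite sum_f_R0_fsum.
  replace (S k) with ((S k - n) + n)%nat by lia.
  rewrite fsum_shift, (fsum_ext (S k - n) (fun i => g (i + n)%nat) (fun _ => 0))
    by (intros; apply H; lia).
  rewrite fsum_const, Rmult_0_r, Rplus_0_r.
  unfold Rdist. rewrite Rminus_diag, Rabs_R0. lra.
Qed.

Lemma infinite_sum_ext g h l : (forall i, g i = h i) -> infinite_sum g l -> infinite_sum h l.
Proof.
  intros E H eps He. destruct (H eps He) as [N HN]. exists N. intros n Hn.
  rewrite sum_f_R0_fsum, <- (fsum_ext _ g h) by auto. rewrite <- sum_f_R0_fsum. auto.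
Qed.

Lemma infinite_sum_tail g l N : infinite_sum g l ->
  infinite_sum (fun k => g (k + N)%nat) (l - fsum N g).
Proof.
  intros H eps He. destruct (H eps He) as [N0 HN]. exists N0. intros n Hn.
  specialize (HN (n + N)%nat ltac:(lia)).
  rewrite sum_f_R0_fsum in *. replace (S (n + N)) with (S n + N)%nat in HN by lia.
  rewrite fsum_shift in HN. unfold Rdist in *.
  replace (fsum (S n) (fun k => g (k + N)%nat) - (l - fsum N g))
    with (fsum N g + fsum (S n) (fun i => g (i + N)%nat) - l) by ring. exact HN.
Qed.

Lemma infinite_sum_untail g l N : infinite_sum (fun k => g (k + N)%nat) l ->
  infinite_sum g (fsum N g + l).
Proof.
  intros H eps He. destruct (H eps He) as [N0 HN]. exists (N0 + N)%nat. intros n Hn.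
  specialize (HN (n - N)%nat ltac:(lia)).
  rewrite sum_f_R0_fsum in *. replace (S n) with (S (n - N) + N)%nat by lia.
  rewrite fsum_shift. unfold Rdist in *.
  replace (fsum N g + fsum (S (n - N)) (fun i => g (i + N)%nat) - (fsum N g + l))
    with (fsum (S (n - N)) (fun k => g (k + N)%nat) - l) by ring. exact HN.
Qed.

Lemma infinite_sum_term_le g l k : (forall i, 0 <= g i) -> infinite_sum g l -> g k <= l.
Proof.
  intros Hg H. apply Rle_trans with (sum_f_R0 g k).
  - rewrite sum_f_R0_fsum. apply fsum_term_le; auto.
  - apply sum_incr; auto.
Qed.

Lemma infinite_sum_scal g l c : infinite_sum g l -> infinite_sum (fun k => g k * c) (l * c).
Proof.
  intros H. assert (Hc : Un_cv (fun _ => c) c).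
  { intros eps He. exists O. intros. unfold Rdist. rewrite Rminus_diag, Rabs_R0. lra. }
  intros eps He. destruct (CV_mult _ _ _ _ H Hc eps He) as [N HN].
  exists N. intros n Hn. rewrite sum_f_R0_fsum, fsum_scal, <- sum_f_R0_fsum. apply HN; auto.
Qed.

Lemma infinite_sum_le g h a b : (forall i, g i <= h i) ->
  infinite_sum g a -> infinite_sum h b -> a <= b.
Proof.
  intros E Ha Hb. apply (@Rle_cv_lim (fun n => sum_f_R0 g n) (fun n => sum_f_R0 h n)); auto.
  intros n. rewrite !sum_f_R0_fsum. apply fsum_le. auto.
Qed.

Definition fentropy (n : nat) (p : nat -> R) : R := fsum n (fun i => negxlogx (p i)).
Definition fdist (n : nat) (p q : nat -> R) : R := fsum n (fun i => Rabs (p i - q i)) / 2.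

Lemma fdist_sym n p q : fdist n p q = fdist n q p.
Proof. unfold fdist. f_equal. apply fsum_ext. intros. apply Rabs_minus_sym. Qed.

Lemma fdist_nonneg n p q : 0 <= fdist n p q.
Proof.
  unfold fdist. pose proof (fsum_nonneg n (fun i => Rabs (p i - q i)) (fun i _ => Rabs_pos _)).
  lra.
Qed.

Section FiniteEntropy.
Variable n : nat.

Lemma fentropy_mixture_ge r a d :
  (forall i, (i < n)%nat -> 0 <= r i) -> (forall i, (i < n)%nat -> 0 <= a i) ->
  fsum n r = 1 - d -> fsum n a = d ->
  fentropy n r + fentropy n a + (1 - d) * ln (1 - d) + d * ln d
  <= fentropy n (fun i => r i + a i).
Proof.
  intros Hr Ha Sr Sa. unfold fentropy.
  apply Rle_trans with
    (fsum n (fun i => negxlogx (r i) + negxlogx (a i) + r i * ln (1 - d) + a i * ln d)).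
  - rewrite !fsum_plus, !fsum_scal, Sr, Sa. lra.
  - apply fsum_le. intros i Hi. apply negxlogx_group; auto; [ring| |].
    + rewrite <- Sr. apply fsum_term_le; auto.
    + rewrite <- Sa. apply fsum_term_le; auto.
Qed.

Lemma fentropy_mass_ge a d : (forall i, (i < n)%nat -> 0 <= a i) -> fsum n a = d ->
  - d * ln d <= fentropy n a.
Proof.
  intros Ha Sa. unfold fentropy. apply Rle_trans with (fsum n (fun i => a i * (- ln d))).
  - rewrite fsum_scal, Sa. lra.
  - apply fsum_le. intros i Hi. apply negxlogx_ge_linear.
    split; [auto|]. rewrite <- Sa. apply fsum_term_le; auto.
Qed.

Lemma fentropy_subadd r b : (forall i, (i < n)%nat -> 0 <= r i) ->
  (forall i, (i < n)%nat -> 0 <= b i) ->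
  fentropy n (fun i => r i + b i) <= fentropy n r + fentropy n b.
Proof.
  intros Hr Hb. unfold fentropy. rewrite <- fsum_plus.
  apply fsum_le. intros i Hi. apply negxlogx_subadd; auto.
Qed.

End FiniteEntropy.

(* Maximum-entropy bound: a vector of total mass d on N + 1 points, one of which
   carries no mass, has entropy at most -d ln d + d ln N (Gibbs' inequality
   against the uniform vector of mass d on the remaining N points). *)
Lemma fentropy_le_with_zero N b d j : (1 <= N)%nat ->
  (forall i, (i < S N)%nat -> 0 <= b i) -> fsum (S N) b = d ->
  (j < S N)%nat -> b j = 0 ->
  fentropy (S N) b <= - d * ln d + d * ln (INR N).
Proof.
  intros HN Hb Sb Hj Hbj. unfold fentropy.
  assert (Hbd : forall i, (i < S N)%nat -> b i <= d).
  { intros i Hi. rewrite <- Sb. apply fsum_term_le; auto. }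
  destruct (Req_dec d 0) as [D0|D0].
  - rewrite (fsum_ext _ _ (fun _ => 0)), fsum_const, D0; [lra|].
    intros i Hi. assert (b i = 0) as -> by (pose proof (Hbd i Hi); pose proof (Hb i Hi); lra).
    apply negxlogx_0.
  - assert (Hd : 0 < d) by (pose proof (fsum_nonneg _ _ Hb); lra).
    assert (NP : 0 < INR N) by (apply lt_0_INR; lia).
    set (c := d / INR N).
    assert (Hc : 0 < c) by (apply Rdiv_lt_0_compat; lra).
    apply Rle_trans with
      (fsum (S N) (fun i => (if Nat.eqb i j then 0 else c) - b i * 1 - b i * ln c)).
    + apply fsum_le. intros i Hi. destruct (Nat.eqb_spec i j) as [->|Hij].
      * rewrite Hbj, negxlogx_0. lra.
      * pose proof (gibbs_term (b i) c (Hb i Hi) ltac:(lra) ltac:(intros; lra)).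
        unfold negxlogx. lra.
    + rewrite !fsum_minus, !fsum_scal, Sb, fsum_except_one by exact Hj.
      replace (S N - 1)%nat with N by lia.
      unfold c, Rdiv. rewrite ln_mult, ln_Rinv by (try apply Rinv_0_lt_compat; lra).
      field_simplify; lra.
Qed.

Lemma overlap_decomposition x y : 0 <= x -> 0 <= y ->
  0 <= Rmin x y /\ 0 <= x - Rmin x y /\ 0 <= y - Rmin x y /\
  (x - Rmin x y) + (y - Rmin x y) = Rabs (x - y) /\
  (0 < x - Rmin x y -> y - Rmin x y = 0).
Proof.
  intros Hx Hy. unfold Rmin. destruct (Rle_dec x y).
  - rewrite Rabs_left1 by lra. lra.
  - rewrite Rabs_right by lra. lra.
Qed.

(* Writing p = r + a and q = r + b with
   r = min p q, the vectors a and b have mass d and disjoint supports. *)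
Lemma fentropy_continuity N p q : (1 <= N)%nat ->
  (forall i, (i < S N)%nat -> 0 <= p i) -> (forall i, (i < S N)%nat -> 0 <= q i) ->
  fsum (S N) p = 1 -> fsum (S N) q = 1 ->
  fentropy (S N) q - fentropy (S N) p
  <= fdist (S N) p q * ln (INR N) + hbin (fdist (S N) p q).
Proof.
  intros HN Hp Hq Sp Sq.
  set (r := fun i => Rmin (p i) (q i)).
  set (a := fun i => p i - r i).
  set (b := fun i => q i - r i).
  set (d := fdist (S N) p q).
  assert (MF : forall i, (i < S N)%nat -> 0 <= r i /\ 0 <= a i /\ 0 <= b i /\
                 a i + b i = Rabs (p i - q i) /\ (0 < a i -> b i = 0))
    by (intros i Hi; apply overlap_decomposition; auto).
  assert (Sab : fsum (S N) a + fsum (S N) b = 2 * d).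
  { rewrite <- fsum_plus. unfold d, fdist.
    rewrite (fsum_ext _ _ (fun i => Rabs (p i - q i))) by (intros i Hi; apply MF; auto).
    field. }
  assert (Sa : fsum (S N) a = d).
  { assert (fsum (S N) a - fsum (S N) b = 0); [|lra].
    rewrite <- fsum_minus, (fsum_ext _ _ (fun i => p i - q i)), fsum_minus by
      (intros; unfold a, b; ring). lra. }
  assert (Sb : fsum (S N) b = d) by lra.
  assert (Sr : fsum (S N) r = 1 - d).
  { rewrite <- Sp, <- Sa, <- fsum_minus. apply fsum_ext. intros; unfold a; ring. }
  assert (Ep : fentropy (S N) p = fentropy (S N) (fun i => r i + a i))
    by (apply fsum_ext; intros; unfold a; f_equal; ring).
  assert (Eq : fentropy (S N) q = fentropy (S N) (fun i => r i + b i))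
    by (apply fsum_ext; intros; unfold b; f_equal; ring).
  (* some point carries no mass of b: one where a is positive, or any point if d = 0 *)
  assert (Hzero : exists j, (j < S N)%nat /\ b j = 0).
  { destruct (Req_dec d 0) as [D0|D0].
    - exists O. split; [lia|]. pose proof (MF O ltac:(lia)).
      pose proof (fsum_term_le (S N) b O ltac:(intros; apply MF; auto) ltac:(lia)). lra.
    - assert (0 < fsum (S N) a) by (pose proof (fsum_nonneg (S N) a ltac:(intros; apply MF; auto)); lra).
      destruct (fsum_exists_pos _ _ H) as [j [Hj Haj]].
      exists j. split; [exact Hj|]. apply MF; auto. }
  destruct Hzero as [j [Hj Hbj]].
  pose proof (fentropy_mixture_ge (S N) r a d ltac:(intros; apply MF; auto)
                ltac:(intros; apply MF; auto) Sr Sa) as LP.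
  pose proof (fentropy_mass_ge (S N) a d ltac:(intros; apply MF; auto) Sa) as LA.
  pose proof (fentropy_subadd (S N) r b ltac:(intros; apply MF; auto)
                ltac:(intros; apply MF; auto)) as UQ.
  pose proof (fentropy_le_with_zero N b d j HN ltac:(intros; apply MF; auto) Sb Hj Hbj) as UB.
  unfold hbin. lra.
Qed.

(* The bound d ln n + h(d) is nondecreasing in d as long as d <= n / (n + 1),
   which is what 1 / (1 - e) <= n + 1 guarantees for d <= e. *)
Lemma fano_bound_mono d e n : 0 <= d <= e -> 0 < e < 1 -> 1 <= n ->
  1 / (1 - e) <= n + 1 -> d * ln n + hbin d <= e * ln n + hbin e.
Proof.
  intros Hd He Hn Hne.
  assert (Hen : e <= n * (1 - e)).
  { apply Rmult_le_compat_r with (r := 1 - e) in Hne; [|lra].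
    unfold Rdiv in Hne. rewrite Rmult_1_l, Rinv_l in Hne by lra. nra. }
  unfold hbin.
  pose proof (gibbs_term d e ltac:(lra) ltac:(lra) ltac:(intros; lra)) as L1.
  pose proof (gibbs_term (1 - d) (1 - e) ltac:(lra) ltac:(lra) ltac:(intros; lra)) as L2.
  assert (ln e <= ln n + ln (1 - e)) by (rewrite <- ln_mult by lra; apply ln_le_mono; lra).
  nra.
Qed.

Lemma pmf_finite_support q n : is_pmf q -> (forall i, (n <= i)%nat -> q i = 0) ->
  fsum n q = 1.
Proof.
  intros [_ Hq1] Hn. eapply uniqueness_sum; [apply infinite_sum_finite, Hn | exact Hq1].
Qed.

Definition lump (p : nat -> R) (N : nat) (i : nat) : R :=
  if (i <? N)%nat then p i else 1 - fsum N p.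

Section Lumping.
Variables (p : nat -> R) (N : nat).
Hypothesis Hp : is_pmf p.

Lemma lump_below i : (i < N)%nat -> lump p N i = p i.
Proof. intros Hi. unfold lump. destruct (Nat.ltb_spec i N); [reflexivity|lia]. Qed.

Lemma lump_at : lump p N N = 1 - fsum N p.
Proof. unfold lump. destruct (Nat.ltb_spec N N); [lia|reflexivity]. Qed.

Lemma tail_mass_series : infinite_sum (fun k => p (k + N)%nat) (1 - fsum N p).
Proof. apply infinite_sum_tail, Hp. Qed.

Lemma tail_mass_range : 0 <= 1 - fsum N p <= 1.
Proof.
  split.
  - apply Rle_trans with (p (0 + N)%nat); [apply Hp|].
    apply (infinite_sum_term_le (fun k => p (k + N)%nat)); [intros; apply Hp|].
    exact tail_mass_series.
  - pose proof (fsum_nonneg N p (fun i _ => proj1 Hp i)). lra.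
Qed.

Lemma lump_nonneg i : 0 <= lump p N i.
Proof. unfold lump. destruct (i <? N)%nat; [apply Hp|apply tail_mass_range]. Qed.

Lemma lump_sum : fsum (S N) (lump p N) = 1.
Proof. simpl. rewrite (fsum_ext N _ p lump_below), lump_at. ring. Qed.

Lemma lump_fentropy : fentropy (S N) (lump p N) = fentropy N p + negxlogx (1 - fsum N p).
Proof.
  unfold fentropy. simpl. rewrite lump_at. f_equal.
  apply fsum_ext. intros i Hi. rewrite lump_below; auto.
Qed.

Lemma lump_tail_entropy_le t : infinite_sum (fun k => negxlogx (p (k + N)%nat)) t ->
  negxlogx (1 - fsum N p) <= t.
Proof.
  intros Ht. set (T := 1 - fsum N p).
  apply (infinite_sum_le (fun k => p (k + N)%nat * (- ln T)) (fun k => negxlogx (p (k + N)%nat))).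
  - intros k. apply negxlogx_ge_linear. split; [apply Hp|].
    apply (infinite_sum_term_le (fun k => p (k + N)%nat)); [intros; apply Hp|apply tail_mass_series].
  - replace (negxlogx T) with (T * - ln T) by (unfold negxlogx; ring).
    apply infinite_sum_scal, tail_mass_series.
  - exact Ht.
Qed.

Lemma lump_fdist q s : (forall i, (N <= i)%nat -> q i = 0) ->
  infinite_sum (fun i => Rabs (q i - p i)) s -> fdist (S N) q (lump p N) = s / 2.
Proof.
  intros Hq Hs.
  assert (Htail : infinite_sum (fun k => p (k + N)%nat)
                    (s - fsum N (fun i => Rabs (q i - p i)))).
  { apply (infinite_sum_ext (fun k => Rabs (q (k + N)%nat - p (k + N)%nat))).
    - intros k. rewrite Hq by lia. rewrite Rminus_0_l, Rabs_Ropp, Rabs_right; auto.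
      apply Rle_ge, Hp.
    - exact (infinite_sum_tail _ _ N Hs). }
  pose proof (uniqueness_sum _ _ _ Htail tail_mass_series) as Es.
  pose proof tail_mass_range.
  unfold fdist. simpl.
  rewrite (fsum_ext N _ (fun i => Rabs (q i - p i))) by (intros i Hi; rewrite lump_below; auto).
  rewrite lump_at, (Hq N) by lia. rewrite Rminus_0_l, Rabs_Ropp, Rabs_right by lra. lra.
Qed.

End Lumping.

Theorem corollary3 (PX PY : nat -> R) (m M : nat) (eta mu : R) :
  is_pmf PX -> is_pmf PY ->
  (forall i, (m <= i)%nat -> PX i = 0) ->
  0 < eta < 1 ->
  (exists d, dTV_is PX PY d /\ d <= eta) ->
  (m + 1 <= M)%nat -> 1 / (1 - eta) <= INR M ->
  0 < mu ->
  (exists t, infinite_sum (fun k => negxlogx (PY (k + (M - 1))%nat)) t /\ t <= mu) ->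
  exists HX HY, entropy_is PX HX /\ entropy_is PY HY /\
    Rabs (HX - HY) <= eta * ln (INR M - 1) + hbin eta + mu.
Proof.
  intros HX HY Hm Heta [d [[s [Hs ->]] Hde]] HmM HMeta Hmu [t [Ht Htmu]].
  set (N := (M - 1)%nat) in *.
  assert (HMN : INR M = INR N + 1)
    by (unfold N; replace M with (S (M - 1)) at 1 by lia; apply S_INR).
  (* X lives on {0, ..., N}, and m >= 1 since X has total mass 1 *)
  assert (HsuppX : forall i, (N <= i)%nat -> PX i = 0) by (intros; apply Hm; lia).
  assert (HN : (1 <= N)%nat).
  { destruct m; [|lia]. pose proof (pmf_finite_support PX 0 HX Hm). simpl in *. lra. }
  pose proof (lump_fdist PY N HY PX s HsuppX Hs) as Ed.
  assert (HX0 : forall i, (i < S N)%nat -> 0 <= PX i) by (intros; apply HX).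
  assert (HY0 : forall i, (i < S N)%nat -> 0 <= lump PY N i) by (intros; apply lump_nonneg, HY).
  assert (HX1 : fsum (S N) PX = 1) by (apply pmf_finite_support; [|intros; apply Hm; lia]; auto).
  pose proof (fentropy_continuity N _ _ HN HX0 HY0 HX1 (lump_sum PY N)) as C1.
  pose proof (fentropy_continuity N _ _ HN HY0 HX0 (lump_sum PY N) HX1) as C2.
  rewrite fdist_sym, Ed in C2. rewrite Ed in C1.
  rewrite lump_fentropy in C1, C2.
  assert (Mono : s / 2 * ln (INR N) + hbin (s / 2) <= eta * ln (INR N) + hbin eta).
  { apply fano_bound_mono; try lra.
    - split; [rewrite <- Ed; apply fdist_nonneg | exact Hde].
    - apply (le_INR 1); exact HN. }
  pose proof (lump_tail_entropy_le PY N HY t Ht) as Htail.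
  pose proof (negxlogx_nonneg _ (tail_mass_range PY N HY)) as Htail0.
  exists (fentropy (S N) PX), (fentropy N PY + t). split; [|split].
  - apply infinite_sum_finite. intros i Hi. rewrite HsuppX by lia. apply negxlogx_0.
  - apply infinite_sum_untail, Ht.
  - replace (INR M - 1) with (INR N) by lra. apply Rabs_le. lra.
Qed.
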